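(* Let $k$ be a field, $J,K$ proper monomial ideals in $Q=k[x,y,z]$, and $I=JK$. Then $[I:x]\cdot[I:(y,z)]\subseteq I$.
   Context: For ideals $I,L$ of $Q$, $I:L=\{f\in Q: fL\subseteq I\}$ and $I:f=I:(f)$. *)

From HB Require Import structures.
From mathcomp Require Import all_boot all_order all_algebra.
Set Implicit Arguments. Unset Strict Implicit. Unset Printing Implicit Defensive.
Import GRing.Theory.
Local Open Scope ring_scope.

(* Q = k[x,y,z] := ((k[z])[y])[x] *)
Definition Q (k : fieldType) : comNzRingType := {poly {poly {poly k}}}.

Definition varx (k : fieldType) : Q k := 'X.
Definition vary (k : fieldType) : Q k := ('X)%:P.
Definition varz (k : fieldType) : Q k := (('X)%:P)%:P.

Definition mono {k : fieldType} (a b c : nat) : Q k :=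
  varx k ^+ a * vary k ^+ b * varz k ^+ c.

Definition is_monomial {k : fieldType} (m : Q k) : Prop :=
  exists a b c, m = @mono k a b c.

Definition subsetQ (k : fieldType) := Q k -> Prop.

Definition is_idealQ {k : fieldType} (I : subsetQ k) : Prop :=
  [/\ I 0,
      (forall f g, I f -> I g -> I (f + g)) &
      (forall r f, I f -> I (r * f))].

Definition gen {k : fieldType} (S : subsetQ k) : subsetQ k :=
  fun f => exists rs : seq (Q k * Q k),
    (forall p, p \in rs -> S p.2) /\ f = \sum_(p <- rs) p.1 * p.2.

Definition subsetQI {k : fieldType} (I L : subsetQ k) : Prop :=
  forall f, I f -> L f.

Definition proper_idealQ {k : fieldType} (I : subsetQ k) : Prop :=
  is_idealQ I /\ ~ I 1.

Definition monomial_ideal {k : fieldType} (I : subsetQ k) : Prop :=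
  is_idealQ I /\ (forall f, I f <-> gen (fun m => is_monomial m /\ I m) f).

Definition idmul {k : fieldType} (I L : subsetQ k) : subsetQ k :=
  gen (fun h => exists f g, I f /\ L g /\ h = f * g).

Definition colon {k : fieldType} (I L : subsetQ k) : subsetQ k :=
  fun f => forall g, L g -> I (f * g).

Definition principalQ {k : fieldType} (f : Q k) : subsetQ k :=
  gen (fun g => g = f).
Definition ideal_yz (k : fieldType) : subsetQ k :=
  gen (fun g => g = vary k \/ g = varz k).

Arguments varx k : clear implicits.
Arguments vary k : clear implicits.
Arguments varz k : clear implicits.
Arguments ideal_yz k : clear implicits.

From HB Require Import structures.
From mathcomp Require Import all_boot all_order all_algebra.
From mathcomp Require Import ring zify.
Set Implicit Arguments. Unset Strict Implicit. Unset Printing Implicit Defensive.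
Import GRing.Theory.
Local Open Scope ring_scope.

(* A monomial ideal contains a polynomial iff it contains every monomial of its
   support, and the monomials of JK are those divisible by m n with m in J and
   n in K.  So it suffices to show that x u, y v, z v in I force u v in I for
   monomials u, v.  This is immediate when x divides v or y or z divides u.
   Otherwise u = x^a, and x^(a+1) is divisible by m n with m in J, n in K; as J
   and K are proper, m and n are positive powers of x, so both divide x^a.
   Write y v as a multiple of m' n' with m' in J, n' in K: either m' n' divides
   v, or one of them absorbs the extra y and the other divides v, and pairing
   the latter with n or m gives a divisor of u v in JK. *)

Lemma sumr_neq0_term (R : nmodType) (I : Type) (r : seq I) (F : I -> R) :
  \sum_(i <- r) F i != 0 -> exists i, F i != 0.
Proof.
elim: r => [|x r IH]; first by rewrite big_nil eqxx.
rewrite big_cons; case: (eqVneq (F x) 0) => [->|]; last by exists x.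
by rewrite add0r.
Qed.

Lemma coefXnMC (R : nzRingType) (p : R) n m :
  ('X^n * p%:P)`_m = if m == n then p else 0.
Proof. by rewrite coefXnM coefC subn_eq0; case: ltngtP. Qed.

Lemma poly_coefK (R : nzRingType) (p : {poly R}) :
  p = \sum_(i < size p) (p`_i)%:P * 'X^i.
Proof.
by rewrite -{1}[p]coefK poly_def; apply: eq_bigr => i _; rewrite mul_polyC.
Qed.

Section Coef3.
Variable R : nzRingType.
Implicit Types f g : {poly {poly {poly R}}}.

Definition coef3 f a b c := f`_a`_b`_c.

Lemma coef3D f g a b c : coef3 (f + g) a b c = coef3 f a b c + coef3 g a b c.
Proof. by rewrite /coef3 !coefD. Qed.

Lemma coef3M f g a b c : coef3 (f * g) a b c != 0 -> exists i j l,
  [/\ (i <= a)%N, (j <= b)%N, (l <= c)%N, coef3 f i j l != 0 &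
      coef3 g (a - i) (b - j) (c - l) != 0].
Proof.
rewrite /coef3 coefM !coef_sum => /sumr_neq0_term [i].
rewrite coefM !coef_sum => /sumr_neq0_term [j].
rewrite coefM => /sumr_neq0_term [l] nz.
exists i, j, l; split; try by rewrite -ltnS ltn_ord.
- by apply: contraNneq nz => ->; rewrite mul0r.
- by apply: contraNneq nz => ->; rewrite mulr0.
Qed.

End Coef3.

Section MonomialIdeals.
Variable k : fieldType.
Implicit Types (f g : Q k) (L J K : subsetQ k) (P : nat -> nat -> nat -> Prop).

Lemma ideal_sum L (I : Type) (r : seq I) (p : pred I) (F : I -> Q k) :
  is_idealQ L -> (forall i, p i -> L (F i)) -> L (\sum_(i <- r | p i) F i).
Proof. by case=> L0 LD _; apply: big_ind. Qed.

Lemma gen_ideal (S : subsetQ k) : is_idealQ (gen S).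
Proof.
split.
- by exists [::]; rewrite big_nil.
- move=> _ _ [r1 [S1 ->]] [r2 [S2 ->]]; exists (r1 ++ r2); split; last first.
    by rewrite big_cat.
  by move=> p; rewrite mem_cat => /orP [/S1|/S2].
- move=> r _ [rs [Srs ->]]; exists [seq (r * p.1, p.2) | p <- rs]; split.
    by move=> _ /mapP [p /Srs Sp ->].
  by rewrite big_map mulr_sumr; apply: eq_bigr => p _; rewrite mulrA.
Qed.

Lemma gen_in (S : subsetQ k) f : S f -> gen S f.
Proof.
move=> Sf; exists [:: (1, f)]; split; first by move=> p; rewrite inE => /eqP ->.
by rewrite big_seq1 mul1r.
Qed.

Lemma gen_min (S : subsetQ k) L :
  is_idealQ L -> (forall f, S f -> L f) -> subsetQI (gen S) L.
Proof.
move=> idL SL _ [rs [Srs ->]]; rewrite big_seq; apply: ideal_sum => // p /Srs.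
by case: idL => _ _ LM /SL; apply: LM.
Qed.

Lemma monoM a b c a' b' c' :
  @mono k a b c * mono a' b' c' = mono (a + a') (b + b') (c + c').
Proof. by rewrite /mono !exprD; ring. Qed.

Lemma mono0 : @mono k 0 0 0 = 1.
Proof. by rewrite /mono !expr0 !mulr1. Qed.

Lemma coef3_mono a b c i j l :
  coef3 (@mono k a b c) i j l = ((i == a) && (j == b) && (l == c))%:R.
Proof.
have -> : @mono k a b c = 'X^a * ('X^b * ('X^c * 1%:P)%:P)%:P.
  by rewrite /mono /varx /vary /varz mulr1 -!rmorphXn -mulrA -!rmorphM.
rewrite /coef3 coefXnMC; case: (i == a); last by rewrite !coef0.
rewrite coefXnMC; case: (j == b); last by rewrite !coef0.
by rewrite coefXnMC; case: (l == c).
Qed.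

Lemma coef3_mulx f a b c : coef3 (f * varx k) a.+1 b c = coef3 f a b c.
Proof. by rewrite /coef3 mulrC /varx coefXM. Qed.

Lemma coef3_muly f a b c : coef3 (f * vary k) a b.+1 c = coef3 f a b c.
Proof. by rewrite /coef3 mulrC /vary coefCM coefXM. Qed.

Lemma coef3_mulz f a b c : coef3 (f * varz k) a b c.+1 = coef3 f a b c.
Proof. by rewrite /coef3 mulrC /varz !coefCM coefXM. Qed.

Lemma mono_expansion f :
  f = \sum_(i < size f) \sum_(j < size f`_i) \sum_(l < size f`_i`_j)
        (coef3 f i j l)%:P%:P%:P * mono i j l.
Proof.
rewrite {1}[f]poly_coefK; apply: eq_bigr => i _.
rewrite {1}[f`_i]poly_coefK rmorph_sum mulr_suml; apply: eq_bigr => j _.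
rewrite {1}[f`_i`_j]poly_coefK !rmorph_sum !mulr_suml rmorph_sum mulr_suml.
apply: eq_bigr => l _.
by rewrite /coef3 /mono /varx /vary /varz !rmorphM /= !rmorphXn /=; ring.
Qed.

Definition supported P f := forall a b c, coef3 f a b c != 0 -> P a b c.

Definition upward_closed P := forall a b c a' b' c',
  P a b c -> (a <= a')%N -> (b <= b')%N -> (c <= c')%N -> P a' b' c'.

Lemma supported_sum P (I : eqType) (r : seq I) (F : I -> Q k) :
  (forall i, i \in r -> supported P (F i)) -> supported P (\sum_(i <- r) F i).
Proof.
move=> PF; rewrite big_seq; apply: big_ind => //.
- by move=> a b c; rewrite /coef3 !coef0 eqxx.
- move=> f g Pf Pg a b c; rewrite coef3D.
  by case: (eqVneq (coef3 f a b c) 0) => [->|/Pf //]; rewrite add0r => /Pg.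
Qed.

Lemma supported_mull P r f :
  upward_closed P -> supported P f -> supported P (r * f).
Proof.
move=> upP Pf a b c /coef3M [i [j [l [_ _ _ _ /Pf]]]].
by move/upP; apply; apply: leq_subr.
Qed.

Lemma supported_mono P a b c : P a b c -> supported P (mono a b c).
Proof.
move=> Pabc i j l; rewrite coef3_mono.
by case: (i =P a) => [->|_]; case: (j =P b) => [->|_];
  case: (l =P c) => [->|_]; rewrite /= ?andbF ?mulr0n ?eqxx.
Qed.

Definition mono_in L a b c := L (mono a b c).

Lemma mono_in_upward L : is_idealQ L -> upward_closed (mono_in L).
Proof.
case=> _ _ LM a b c a' b' c' Labc ha hb hc; rewrite /mono_in.
by rewrite -(subnK ha) -(subnK hb) -(subnK hc) -monoM; apply: LM.
Qed.

Lemma mono_in_gt0 L a b c : ~ L 1 -> mono_in L a b c -> (0 < a + b + c)%N.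
Proof. by move=> L1; case: a b c => [|a] [|b] [|c] //; rewrite /mono_in mono0. Qed.

Lemma ideal_supported L f : is_idealQ L -> supported (mono_in L) f -> L f.
Proof.
move=> idL Lf; rewrite [f]mono_expansion.
apply: ideal_sum => // i _; apply: ideal_sum => // j _.
apply: ideal_sum => // l _; have [L0 _ LM] := idL.
have [->|/Lf Lijl] := eqVneq (coef3 f i j l) 0; first by rewrite !mul0r.
exact: LM.
Qed.

Lemma monomial_ideal_supported J f :
  monomial_ideal J -> J f -> supported (mono_in J) f.
Proof.
case=> idJ genJ /genJ [rs [Jrs ->]]; apply: supported_sum => p /Jrs.
case=> [[a [b [c Ep]]] Jp]; apply: supported_mull; first exact: mono_in_upward.
by rewrite Ep; apply: supported_mono; rewrite /mono_in -Ep.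
Qed.

Definition mono_dvd_prod J K a b c := exists a1 b1 c1 a2 b2 c2,
  [/\ mono_in J a1 b1 c1, mono_in K a2 b2 c2,
      (a1 + a2 <= a)%N, (b1 + b2 <= b)%N & (c1 + c2 <= c)%N].

Lemma mono_dvd_prod_upward J K : upward_closed (mono_dvd_prod J K).
Proof.
move=> a b c a' b' c' [a1 [b1 [c1 [a2 [b2 [c2 [J1 K2 ha hb hc]]]]]]] ha' hb' hc'.
by exists a1, b1, c1, a2, b2, c2; split => //; lia.
Qed.

Lemma mono_dvd_prod_idmul J K a b c :
  mono_dvd_prod J K a b c -> mono_in (idmul J K) a b c.
Proof.
move=> [a1 [b1 [c1 [a2 [b2 [c2 [J1 K2 ha hb hc]]]]]]].
apply: (mono_in_upward (gen_ideal _) _ ha hb hc); rewrite /mono_in -monoM.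
by apply: gen_in; exists (mono a1 b1 c1), (mono a2 b2 c2).
Qed.

Lemma idmul_supportedP J K f : monomial_ideal J -> monomial_ideal K ->
  idmul J K f <-> supported (mono_dvd_prod J K) f.
Proof.
move=> mJ mK; split; last first.
  move=> IJf; apply: ideal_supported; first exact: gen_ideal.
  by move=> a b c /IJf /mono_dvd_prod_idmul.
case=> rs [IJrs ->]; apply: supported_sum => p /IJrs [g [h [Jg [Kh ->]]]].
apply: supported_mull; first exact: mono_dvd_prod_upward.
move=> a b c /coef3M [i [j [l [ia jb lc]]]].
move=> /(monomial_ideal_supported mJ Jg) Jijl /(monomial_ideal_supported mK Kh).
by exists i, j, l, (a - i)%N, (b - j)%N, (c - l)%N; split => //; lia.
Qed.

Lemma mono_dvd_prod_colon J K u1 u2 u3 v1 v2 v3 : ~ J 1 -> ~ K 1 ->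
  mono_dvd_prod J K u1.+1 u2 u3 -> mono_dvd_prod J K v1 v2.+1 v3 ->
  mono_dvd_prod J K v1 v2 v3.+1 ->
  mono_dvd_prod J K (u1 + v1) (u2 + v2) (u3 + v3).
Proof.
move=> J1 K1 xu yv zv; have up := @mono_dvd_prod_upward J K.
have [v1_gt0|v1_0] := ltnP 0 v1; first by apply: (up _ _ _ _ _ _ xu); lia.
have [u2_gt0|u2_0] := ltnP 0 u2; first by apply: (up _ _ _ _ _ _ yv); lia.
have [u3_gt0|u3_0] := ltnP 0 u3; first by apply: (up _ _ _ _ _ _ zv); lia.
case: xu => [a1 [b1 [c1 [a2 [b2 [c2 [J1x K2x hax hbx hcx]]]]]]].
have a1_gt0 := mono_in_gt0 J1 J1x; have a2_gt0 := mono_in_gt0 K1 K2x.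
case: yv => [a3 [b3 [c3 [a4 [b4 [c4 [J3y K4y hay hby hcy]]]]]]].
have [b34_le|b34_gt] := leqP (b3 + b4) v2.
  by exists a3, b3, c3, a4, b4, c4; split => //; lia.
have [b3_gt0|b3_0] := ltnP 0 b3.
  by exists a1, b1, c1, a4, b4, c4; split => //; lia.
by exists a3, b3, c3, a2, b2, c2; split => //; lia.
Qed.

Lemma colon_mul_mem J K f g :
  monomial_ideal J -> monomial_ideal K -> ~ J 1 -> ~ K 1 ->
  colon (idmul J K) (principalQ (varx k)) f ->
  colon (idmul J K) (ideal_yz k) g -> idmul J K (f * g).
Proof.
move=> mJ mK J1 K1 fx gyz.
have /(idmul_supportedP _ mJ mK) Sx := fx _ (gen_in (erefl (varx k))).
have /(idmul_supportedP _ mJ mK) Sy := gyz _ (gen_in (or_introl (erefl (vary k)))).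
have /(idmul_supportedP _ mJ mK) Sz := gyz _ (gen_in (or_intror (erefl (varz k)))).
apply/idmul_supportedP => // a b c /coef3M [i [j [l [ia jb lc fijl gijl]]]].
rewrite -(subnKC ia) -(subnKC jb) -(subnKC lc).
by apply: mono_dvd_prod_colon J1 K1 _ _ _;
  [apply: Sx; rewrite coef3_mulx | apply: Sy; rewrite coef3_muly
  | apply: Sz; rewrite coef3_mulz].
Qed.

End MonomialIdeals.

Theorem mainTheorem6 (k : fieldType) (J K : subsetQ k) :
  monomial_ideal J -> proper_idealQ J ->
  monomial_ideal K -> proper_idealQ K ->
  let I := idmul J K in
  subsetQI (idmul (colon I (principalQ (varx k))) (colon I (ideal_yz k))) I.
Proof.
move=> mJ [_ J1] mK [_ K1] I; apply: gen_min; first exact: gen_ideal.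
by move=> _ [f [g [fx [gyz ->]]]]; apply: colon_mul_mem.
Qed.
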